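(* Let $X$ be a finite positive definite metric space and let $x\in X$. Suppose there exists a probability measure $\nu$ on $X$ with $\nu(\{x\})=0$ such that $$\sum_{z\in X}e^{-d(y,z)}\nu(z)\le e^{-d(x,y)}\qquad\text{for all }y\in X.$$ Then $x$ does not belong to the support of the diversity-maximizing measure of $X$.
   Context: A finite metric space $(X,d)$ is positive definite if the matrix $Z=(e^{-d(x,y)})_{x,y\in X}$ is positive definite. The diversity-maximizing measure is the (unique, by positive definiteness) probability measure $\mu$ on $X$ minimizing $\sum_{x,y}e^{-d(x,y)}\mu(x)\mu(y)$; its support is $\{y:\mu(y)>0\}$. *)

From mathcomp Require Import all_boot all_order all_algebra.
From mathcomp Require Import reals.
From mathcomp Require Import sequences exp.
Set Implicit Arguments. Unset Strict Implicit. Unset Printing Implicit Defensive.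
Import Order.TTheory GRing.Theory Num.Theory.
Local Open Scope ring_scope.

Definition is_metric (R : realType) (X : finType) (d : X -> X -> R) : Prop :=
  [/\ forall x y, 0 <= d x y,
      forall x y, d x y = 0 <-> x = y,
      forall x y, d x y = d y x &
      forall x y z, d x z <= d x y + d y z].

Definition simmx (R : realType) (X : finType) (d : X -> X -> R) : 'M[R]_#|X| :=
  \matrix_(i, j) expR (- d (enum_val i) (enum_val j)).

Definition posdef_mx (R : realType) (n : nat) (A : 'M[R]_n) : Prop :=
  forall v : 'cV[R]_n, v != 0 -> 0 < (v^T *m A *m v) ord0 ord0.

Definition positive_definite_space (R : realType) (X : finType) (d : X -> X -> R) : Prop :=
  posdef_mx (simmx d).

Definition is_prob (R : realType) (X : finType) (mu : X -> R) : Prop :=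
  (forall x, 0 <= mu x) /\ \sum_(x : X) mu x = 1.

Definition qform (R : realType) (X : finType) (d : X -> X -> R) (mu : X -> R) : R :=
  \sum_(x : X) \sum_(y : X) expR (- d x y) * mu x * mu y.

(* mu is a (the, by positive definiteness) diversity-maximizing measure:
   a probability measure minimizing the quadratic form. *)
Definition diversity_maximizing (R : realType) (X : finType) (d : X -> X -> R)
    (mu : X -> R) : Prop :=
  is_prob mu /\ forall nu : X -> R, is_prob nu -> qform d mu <= qform d nu.

Definition msupport (R : realType) (X : finType) (mu : X -> R) : pred X :=
  fun y => 0 < mu y.

(** Put [w := nu - δ_x] and [Zw y := Σ_z e^{-d(y,z)} w(z)]; the hypothesis on [nu]
    says exactly that [Zw <= 0].  If [mu(x) > 0] then [mu + t w] is a probability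
    measure for [0 < t <= mu(x)], so first-order optimality of [mu] gives
    [Σ_y mu(y) Zw(y) >= 0]; all terms being [<= 0], this forces [Zw(x) >= 0].
    But then [w^T Z w = Σ_y nu(y) Zw(y) - Zw(x) <= 0], contradicting positive
    definiteness since [w(x) = -1]. *)

From mathcomp Require Import all_boot all_order all_algebra.
From mathcomp Require Import reals.
From mathcomp Require Import sequences exp.
From mathcomp Require Import ring lra.
Set Implicit Arguments. Unset Strict Implicit. Unset Printing Implicit Defensive.
Import Order.TTheory GRing.Theory Num.Theory.
Local Open Scope ring_scope.

Lemma sum_indicator_mul (R : pzRingType) (X : finType) (x : X) (F : X -> R) :
  \sum_(y : X) (y == x)%:R * F y = F x.
Proof.
under eq_bigr do rewrite mulr_natl mulrb.
by rewrite -big_mkcond big_pred1_eq.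
Qed.

Lemma sum_enum_val (V : nmodType) (X : finType) (F : X -> V) :
  \sum_(y : X) F y = \sum_(i < #|X|) F (enum_val i).
Proof.
rewrite (reindex (@enum_val X X)) //.
by exists (@enum_rank X) => i _; [exact: enum_valK | exact: enum_rankK].
Qed.

Lemma le0_first_order_coef (R : realFieldType) (a b c : R) : 0 < a ->
  (forall t, 0 < t -> t <= a -> 0 <= 2 * b + t * c) -> 0 <= b.
Proof.
move=> a_gt0 hq; rewrite leNgt; apply/negP => b_lt0.
have c1_gt0 : 0 < `|c| + 1 by rewrite ltr_pwDr ?normr_ge0.
pose t := Num.min a (- b / (`|c| + 1)).
have t_gt0 : 0 < t by rewrite lt_min a_gt0 divr_gt0 // oppr_gt0.
have tc_le : t * c <= - b.
  apply: (@le_trans _ _ (t * (`|c| + 1))).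
    by rewrite ler_pM2l // ler_wpDr ?ler01 // ler_norm.
  by rewrite -ler_pdivlMr // ge_min lexx orbT.
have t_le : t <= a by rewrite ge_min lexx.
have := hq t t_gt0 t_le; lra.
Qed.

Section SymmetricBilinearForm.
Variables (R : comPzRingType) (X : finType) (K : X -> X -> R).
Hypothesis K_sym : forall y z, K y z = K z y.

Definition bform (f g : X -> R) : R := \sum_(y : X) \sum_(z : X) K y z * f y * g z.

Definition kmul (g : X -> R) (y : X) : R := \sum_(z : X) K y z * g z.

Lemma bformE f g : bform f g = \sum_(y : X) f y * kmul g y.
Proof.
apply: eq_bigr => y _; rewrite mulr_sumr; apply: eq_bigr => z _.
by rewrite mulrA (mulrC (f y)).
Qed.

Lemma bformC f g : bform f g = bform g f.
Proof.
rewrite /bform exchange_big; apply: eq_bigr => y _; apply: eq_bigr => z _.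
by rewrite K_sym -!mulrA (mulrC (f z)).
Qed.

Lemma bform_shift f g t :
  bform (fun y => f y + t * g y) (fun y => f y + t * g y) =
  bform f f + 2 * t * bform f g + t ^+ 2 * bform g g.
Proof.
transitivity (\sum_(y : X) \sum_(z : X) (K y z * f y * f z + t * (K y z * f y * g z)
   + t * (K y z * g y * f z) + t ^+ 2 * (K y z * g y * g z))).
  by apply: eq_bigr => y _; apply: eq_bigr => z _; ring.
under eq_bigr do rewrite !big_split -!mulr_sumr.
rewrite !big_split -!mulr_sumr /= -/(bform f f) -/(bform f g) -/(bform g f).
rewrite -/(bform g g) (bformC g f); ring.
Qed.

End SymmetricBilinearForm.

Section DiversityMaximizing.
Variables (R : realType) (X : finType) (d : X -> X -> R).
Hypothesis d_sym : forall y z, d y z = d z y.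

Let K (y z : X) : R := expR (- d y z).

Let K_sym y z : K y z = K z y.
Proof. by rewrite /K d_sym. Qed.

Lemma simmx_bform (f : X -> R) (v := \col_i f (enum_val i)) :
  (v^T *m simmx d *m v) ord0 ord0 = bform K f f.
Proof.
rewrite mxE /bform exchange_big /= (@sum_enum_val _ X).
apply: eq_bigr => j _; rewrite mxE (@sum_enum_val _ X) mulr_suml; apply: eq_bigr => i _.
by rewrite !mxE (mulrC (f _)).
Qed.

Lemma positive_definite_bform_gt0 (w : X -> R) (x : X) :
  positive_definite_space d -> w x != 0 -> 0 < bform K w w.
Proof.
move=> hpd wx; rewrite -simmx_bform; apply: hpd.
apply: contra wx => /eqP v0.
by have := congr1 (fun v : 'cV[R]_#|X| => v (enum_rank x) ord0) v0; rewrite !mxE enum_rankK => ->.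
Qed.

Lemma diversity_maximizing_direction (mu w : X -> R) (a : R) :
  diversity_maximizing d mu -> \sum_(z : X) w z = 0 -> 0 < a ->
  (forall t z, 0 < t -> t <= a -> 0 <= mu z + t * w z) ->
  0 <= bform K mu w.
Proof.
move=> [[_ mu1] mu_min] w0 a_gt0 hfeas.
apply: (le0_first_order_coef (c := bform K w w) a_gt0) => t t_gt0 t_le.
have prob_t : is_prob (fun z => mu z + t * w z).
  split=> [z|]; first exact: hfeas.
  by rewrite big_split /= -mulr_sumr w0 mulr0 addr0.
have := mu_min _ prob_t.
rewrite /qform -/(bform K mu mu) -/(bform K _ _) bform_shift // => hq.
have : 0 <= t * (2 * bform K mu w + t * bform K w w) by lra.
by rewrite pmulr_rge0.
Qed.

End DiversityMaximizing.

Theorem proposition4p4 (R : realType) (X : finType) (d : X -> X -> R)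
  (hd : is_metric d) (hpd : positive_definite_space d) (x : X) :
  (exists nu : X -> R, [/\ is_prob nu, nu x = 0 &
     forall y : X, \sum_(z : X) expR (- d y z) * nu z <= expR (- d x y)]) ->
  forall mu : X -> R, diversity_maximizing d mu -> x \notin msupport mu.
Proof.
case=> nu [[nu_ge0 nu1] nux hnu] mu mu_max; have [[mu_ge0 _] _] := mu_max.
apply/negP; rewrite unfold_in /msupport => mux_gt0.
case: hd => _ _ d_sym _.
pose K y z := expR (- d y z).
pose w z := nu z - (z == x)%:R.
have Zw_le0 y : kmul K w y <= 0.
  rewrite /kmul /w; under eq_bigr do rewrite mulrBr.
  rewrite sumrB; under [X in _ - X]eq_bigr do rewrite mulrC.
  by rewrite sum_indicator_mul subr_le0 /K d_sym; exact: hnu.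
have w_sum0 : \sum_(z : X) w z = 0.
  rewrite sumrB nu1; under eq_bigr do rewrite -[_%:R]mulr1.
  by rewrite sum_indicator_mul subrr.
have b_ge0 : 0 <= bform K mu w.
  apply: (diversity_maximizing_direction d_sym mu_max w_sum0 mux_gt0) => t z t_gt0 t_le.
  rewrite /w; case: eqVneq => [->|_]; first by rewrite nux sub0r mulrN1 subr_ge0.
  by rewrite subr0 addr_ge0 // mulr_ge0 // ltW.
have Zwx_ge0 : 0 <= kmul K w x.
  suff : bform K mu w <= mu x * kmul K w x by move/(le_trans b_ge0); rewrite pmulr_rge0.
  rewrite bformE (bigD1 x) //= gerDl.
  by apply: sumr_le0 => y _; rewrite mulr_ge0_le0.
have : bform K w w <= - kmul K w x.
  rewrite bformE /w; under eq_bigr do rewrite mulrBl.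
  rewrite sumrB sum_indicator_mul -[X in _ <= X]add0r lerD2r.
  by apply: sumr_le0 => y _; rewrite mulr_ge0_le0.
have wx_neq0 : w x != 0 by rewrite /w nux eqxx sub0r oppr_eq0 oner_eq0.
have := positive_definite_bform_gt0 hpd wx_neq0; lra.
Qed.
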